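(* Let $\delta_j,\delta_k$ be coprime integers with $1<\delta_j<\delta_k$, let $r=\delta_k\bmod\delta_j$ and let $f\colon \mathcal B(\delta_j,r)\to\mathcal B(\delta_k,\delta_j)$, $f(x',y')=(y',\,x'-y'\lfloor \delta_k/\delta_j\rfloor)$. Then the irreducible elements of $\mathcal B(\delta_k,\delta_j)\setminus f(\mathcal B(\delta_j,r))$ are exactly the B\'ezout couples $(1,y)$ with $-\lfloor\delta_k/\delta_j\rfloor<y\le 0$.
   Context: For coprime positive integers $p,q$ and $i\in\{1,\ldots,\max\{p,q\}\}$, the $\lambda$-B\'ezout couple $\boldsymbol\lambda_i$ of $i$ for $(p,q)$ is the unique $(x,y)\in\mathbb Z^2$ with $xp+yq=i$ and $0<y\le p$, and the $\mu$-B\'ezout couple $\boldsymbol\mu_i$ of $i$ for $(p,q)$ is the unique $(x,y)\in\mathbb Z^2$ with $xp+yq=i$ and $0<x\le q$. $\mathcal B(p,q)$ denotes the set of all $\lambda$- and $\mu$-B\'ezout couples for $(p,q)$. $\boldsymbol\lambda_i$ is irreducible if there are no $j,k\in\{1,\ldots,\max\{p,q\}\}$ with $\boldsymbol\lambda_i=\boldsymbol\lambda_j+\boldsymbol\lambda_k$; likewise $\boldsymbol\mu_i$ is irreducible if there are no such $j,k$ with $\boldsymbol\mu_i=\boldsymbol\mu_j+\boldsymbol\mu_k$. *)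

From Stdlib Require Import ZArith.
Open Scope Z_scope.

Definition is_lambda (p q i : Z) (c : Z * Z) : Prop :=
  fst c * p + snd c * q = i /\ 0 < snd c <= p.

Definition is_mu (p q i : Z) (c : Z * Z) : Prop :=
  fst c * p + snd c * q = i /\ 0 < fst c <= q.

Definition in_range (p q i : Z) : Prop := 1 <= i <= Z.max p q.

Definition bezout_set (p q : Z) (c : Z * Z) : Prop :=
  exists i, in_range p q i /\ (is_lambda p q i c \/ is_mu p q i c).

Definition add_couple (a b : Z * Z) : Z * Z := (fst a + fst b, snd a + snd b).

Definition lambda_irreducible (p q : Z) (c : Z * Z) : Prop :=
  (exists i, in_range p q i /\ is_lambda p q i c) /\
  ~ (exists j k cj ck, in_range p q j /\ in_range p q k /\
       is_lambda p q j cj /\ is_lambda p q k ck /\ c = add_couple cj ck).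

Definition mu_irreducible (p q : Z) (c : Z * Z) : Prop :=
  (exists i, in_range p q i /\ is_mu p q i c) /\
  ~ (exists j k cj ck, in_range p q j /\ in_range p q k /\
       is_mu p q j cj /\ is_mu p q k ck /\ c = add_couple cj ck).

Definition irreducible_elt (p q : Z) (c : Z * Z) : Prop :=
  lambda_irreducible p q c \/ mu_irreducible p q c.

Definition fmap (dj dk : Z) (c : Z * Z) : Z * Z :=
  (snd c, fst c - snd c * (dk / dj)).

(** The map [f] preserves the index [i] of a Bezout couple, its inverse being
    [(x, y) |-> (y + x * floor(dk/dj), x)], and every element of
    [B(dj, dk mod dj)] has index at most [dj].  Conversely each couple of
    [B(dk, dj)] with index at most [dj] has its preimage in [B(dj, dk mod dj)]:
    a mu-couple goes to a lambda-couple and a lambda-couple to a mu-couple.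
    Hence the complement of the image consists of the couples of index in
    [(dj, dk]].  Among these, a lambda-couple splits off [lambda_dj = (0, 1)]
    and a mu-couple with [x > 1] splits off [mu_r = (1, -floor(dk/dj))]; the
    remaining couples [(1, y)] are trivially mu-irreducible, and their index
    [dk + y dj] lies in [(dj, dk]] exactly when [-floor(dk/dj) < y <= 0]. *)

From Stdlib Require Import ZArith Lia.
Open Scope Z_scope.

Definition bezout_index (p q : Z) (c : Z * Z) : Z := fst c * p + snd c * q.

Definition fmap_preimage (dj dk : Z) (c : Z * Z) : Z * Z :=
  (snd c + fst c * (dk / dj), fst c).

Lemma fmap_index (dj dk : Z) (c' : Z * Z) :
  bezout_index dk dj (fmap dj dk c') = bezout_index dj (dk mod dj) c'.
Proof.
  unfold bezout_index, fmap; cbn [fst snd].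
  pose proof (Z_div_mod_eq_full dk dj).
  replace (dk mod dj) with (dk - dj * (dk / dj)) by lia.
  ring.
Qed.

Lemma fmap_fmap_preimage (dj dk : Z) (c : Z * Z) :
  fmap dj dk (fmap_preimage dj dk c) = c.
Proof.
  destruct c as [x y]; unfold fmap, fmap_preimage; cbn [fst snd]; f_equal; ring.
Qed.

Lemma in_fmap_image_iff (dj dk : Z) (S : Z * Z -> Prop) (c : Z * Z) :
  (exists c', S c' /\ fmap dj dk c' = c) <-> S (fmap_preimage dj dk c).
Proof.
  split.
  - intros [[x' y'] [HS <-]]; unfold fmap, fmap_preimage; cbn [fst snd].
    replace (x' - y' * (dk / dj) + y' * (dk / dj)) with x' by ring; exact HS.
  - intros HS; exists (fmap_preimage dj dk c); split; [exact HS|].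
    apply fmap_fmap_preimage.
Qed.

Lemma bezout_set_index (p q : Z) (c : Z * Z) :
  bezout_set p q c -> 1 <= bezout_index p q c <= Z.max p q.
Proof.
  unfold bezout_set, in_range, is_lambda, is_mu, bezout_index.
  intros [i [Hi [[<- _] | [<- _]]]]; exact Hi.
Qed.

Lemma mu_fmap_preimage (p q i : Z) (c : Z * Z) :
  is_mu p q i c -> is_lambda q (p mod q) i (fmap_preimage q p c).
Proof.
  intros [Hi Hx]; split; [|exact Hx].
  rewrite <- Hi.
  change (bezout_index q (p mod q) (fmap_preimage q p c) = bezout_index p q c).
  rewrite <- fmap_index, fmap_fmap_preimage; reflexivity.
Qed.

Section Complement.

Variables p q : Z.
Hypothesis q_gt0 : 0 < q.
Hypothesis q_lt_p : q < p.
Hypothesis mod_gt0 : 0 < p mod q.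

Local Notation a := (p / q).
Local Notation r := (p mod q).

Let p_div_mod : p = q * a + r.
Proof. exact (Z_div_mod_eq_full p q). Qed.

Let mod_lt : r < q.
Proof. apply Z.mod_pos_bound; exact q_gt0. Qed.

Let div_ge1 : 1 <= a.
Proof. nia. Qed.

Lemma lambda_fmap_preimage (i : Z) (c : Z * Z) :
  1 <= i <= q -> is_lambda p q i c -> is_mu q r i (fmap_preimage q p c).
Proof.
  destruct c as [x y]; unfold is_lambda, is_mu, fmap_preimage; cbn [fst snd].
  intros Hi [Hidx Hy].
  assert (x <= 0) by nia.
  assert (1 - q <= x) by nia.
  (* [(y + x a) q = i - x r <= q + (q - 1) r < (r + 1) q] uses [r > 0] *)
  assert (Hz : (y + x * a) * q = i - x * r) by nia.
  split; nia.
Qed.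

Lemma in_fmap_image_iff_index_le (c : Z * Z) :
  bezout_set p q c ->
  (exists c', bezout_set q r c' /\ fmap q p c' = c) <-> bezout_index p q c <= q.
Proof.
  intros HB; rewrite in_fmap_image_iff; split.
  - intros HB'%bezout_set_index.
    rewrite <- fmap_index, fmap_fmap_preimage, Z.max_l in HB' by lia; lia.
  - intros Hle; destruct HB as [i [Hi Hc]]; unfold in_range in Hi.
    assert (Hidx : bezout_index p q c = i)
      by (destruct Hc as [[<- _] | [<- _]]; reflexivity).
    assert (Hi' : in_range q r i) by (unfold in_range; rewrite Z.max_l; lia).
    exists i; split; [exact Hi'|].
    destruct Hc as [Hl | Hm].
    + right; apply lambda_fmap_preimage; [lia | exact Hl].
    + left; apply mu_fmap_preimage; exact Hm.
Qed.

Lemma not_lambda_irreducible_of_index_gt (c : Z * Z) :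
  q < bezout_index p q c -> ~ lambda_irreducible p q c.
Proof.
  destruct c as [x y]; unfold bezout_index; cbn [fst snd].
  intros Hgt [[i [Hi [Hidx Hy]]] Hno].
  unfold in_range in Hi; rewrite Z.max_l in Hi by lia; cbn [fst snd] in *.
  assert (y <> 1) by (intros ->; destruct (Z_le_gt_dec x 0); nia).
  apply Hno; exists q, (i - q), (0, 1), (x, y - 1).
  unfold in_range, is_lambda, add_couple; cbn [fst snd]; rewrite Z.max_l by lia.
  repeat split; try lia; f_equal; ring.
Qed.

Lemma not_mu_irreducible_of_index_gt (c : Z * Z) :
  q < bezout_index p q c -> fst c <> 1 -> ~ mu_irreducible p q c.
Proof.
  destruct c as [x y]; unfold bezout_index; cbn [fst snd].
  intros Hgt Hx1 [[i [Hi [Hidx Hx]]] Hno].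
  unfold in_range in Hi; rewrite Z.max_l in Hi by lia; cbn [fst snd] in *.
  apply Hno; exists r, (i - r), (1, - a), (x - 1, y + a).
  unfold in_range, is_mu, add_couple; cbn [fst snd]; rewrite Z.max_l by lia.
  repeat split; try lia; f_equal; ring.
Qed.

Lemma mu_irreducible_one (y : Z) :
  in_range p q (bezout_index p q (1, y)) -> mu_irreducible p q (1, y).
Proof.
  intros Hi; split.
  - exists (bezout_index p q (1, y)); split; [exact Hi|].
    split; [reflexivity | cbn [fst snd]; lia].
  - intros [j [k [[x1 y1] [[x2 y2] [_ [_ [[_ H1] [[_ H2] He]]]]]]]].
    cbn [fst snd] in *; injection He; lia.
Qed.

Lemma index_one_bounds (y : Z) :
  q < bezout_index p q (1, y) <= p <-> - a < y <= 0.
Proof. unfold bezout_index; cbn [fst snd]; nia. Qed.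

End Complement.

Lemma mod_pos_of_coprime (dj dk : Z) :
  1 < dj -> Z.gcd dj dk = 1 -> 0 < dk mod dj.
Proof.
  intros Hj Hg.
  assert (Hr0 : dk mod dj <> 0).
  { intros H0; pose proof (Z.gcd_mod dk dj ltac:(lia)) as Hgm.
    rewrite H0, Z.gcd_0_l, Hg in Hgm; lia. }
  pose proof (Z.mod_pos_bound dk dj ltac:(lia)); lia.
Qed.

Theorem proposition3p9 (dj dk : Z) :
  1 < dj -> dj < dk -> Z.gcd dj dk = 1 ->
  forall c : Z * Z,
    (bezout_set dk dj c /\ irreducible_elt dk dj c /\
     ~ (exists c', bezout_set dj (dk mod dj) c' /\ fmap dj dk c' = c))
    <->
    (bezout_set dk dj c /\
     exists y, c = (1, y) /\ - (dk / dj) < y <= 0).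
Proof.
  intros Hj Hjk Hg c.
  assert (Hj0 : 0 < dj) by lia.
  pose proof (mod_pos_of_coprime dj dk Hj Hg) as Hr.
  split.
  - intros [HB [Hirr Hout]]; split; [exact HB|].
    rewrite (in_fmap_image_iff_index_le dk dj Hj0 Hjk Hr c HB) in Hout.
    pose proof (bezout_set_index _ _ _ HB) as Hidx; rewrite Z.max_l in Hidx by lia.
    destruct c as [x y]; destruct (Z.eq_dec x 1) as [-> | Hx1].
    + exists y; split; [reflexivity|].
      apply (index_one_bounds dk dj Hj0 Hjk Hr); lia.
    + destruct Hirr as [Hl | Hm].
      * contradict Hl.
        apply (not_lambda_irreducible_of_index_gt dk dj Hj0 Hjk Hr); lia.
      * contradict Hm.
        apply (not_mu_irreducible_of_index_gt dk dj Hj0 Hjk Hr); [lia | exact Hx1].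
  - intros [HB [y [-> Hy]]]; split; [exact HB|].
    apply (index_one_bounds dk dj Hj0 Hjk Hr) in Hy; split.
    + right; apply (mu_irreducible_one dk dj Hj0).
      unfold in_range; rewrite Z.max_l; lia.
    + rewrite (in_fmap_image_iff_index_le dk dj Hj0 Hjk Hr _ HB); lia.
Qed.
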